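(* Let $S$ be a bottomed linearly ordered set with $\omega_0\le\chi(S)$. Define $I\colon S\to\mathbb{H}(S)$ by $I(s)=e_{\mathcal{H}((S^* )^{\mathrm{op}}),\,W_S(s)}$ if $\perp_S<s$ and $I(\perp_S)=0$. Then $I$ is an isotone embedding (injective and order preserving) whose image is a g-characteristic subset of the linearly ordered Abelian group $\mathbb{H}(S)$, i.e. $0$ lies in the image and for every $f\in\mathbb{H}(S)$ with $f>0$ there exists $s\in S^*$ with $0<I(s)<f$.
   Context: A bottomed linearly ordered set $S$ has a least element $\perp_S$; $S^*=S\setminus\{\perp_S\}$. The character $\chi(S)$ is the least cardinal $\kappa>0$ such that some strictly decreasing family $(s_\alpha)_{\alpha<\kappa}$ in $S^*$ has every $t\in S^*$ bounded below by some $s_\alpha$. For a linearly ordered set $L$, $L^{\mathrm{op}}$ is $L$ with the reversed order. A subset of $L$ is dually well-ordered if each of its non-empty subsets has a maximum. The Hahn group $\mathcal{H}(L)$ is the set of maps $f\colon L\to\mathbb{R}$ whose support $\{x:f(x)\ne0\}$ is dually well-ordered, with pointwise addition and order $f<g$ iff $f\neq g$ and $f(\theta)<g(\theta)$ where $\theta=\max\{x:f(x)\ne g(x)\}$; it is a linearly ordered Abelian group. For $s\in L$, $e_{L,s}\in\mathcal{H}(L)$ is the function with $e_{L,s}(s)=1$ and $e_{L,s}(x)=0$ for $x\ne s$. For a linearly ordered Abelian group $G$, the Hahn field $\mathcal{H}(G)$ is the Hahn group with the product $(fg)(x)=\sum_{a+b=x}f(a)g(b)$. Define $\mathbb{H}(S)$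 to be the Hahn field of the linearly ordered Abelian group $\mathcal{H}((S^* )^{\mathrm{op}})$, and $W_S\colon S^*\to\mathcal{H}((S^* )^{\mathrm{op}})$ by $W_S(s)=-e_{(S^* )^{\mathrm{op}},s}$. *)

From mathcomp Require Import all_boot all_order.
From Stdlib Require Import Reals Lra Classical ClassicalEpsilon.
Import Order.TTheory.

Set Implicit Arguments.
Unset Strict Implicit.
Unset Printing Implicit Defensive.

Definition rle (T : Type) (lt : T -> T -> Prop) (x y : T) : Prop := x = y \/ lt x y.

Definition dually_wo (T : Type) (lt : T -> T -> Prop) (A : T -> Prop) : Prop :=
  forall B : T -> Prop, (forall x, B x -> A x) -> (exists x, B x) ->
    exists m, B m /\ forall x, B x -> rle lt x m.

Record hahn (T : Type) (lt : T -> T -> Prop) := Hahn {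
  hfun :> T -> R;
  hsupp : dually_wo lt (fun x => hfun x <> R0) }.

(* f < g iff f <> g and f(theta) < g(theta) where theta = max{x | f x <> g x};
   unfolded: theta is a point with f theta < g theta above which f and g agree. *)
Definition hahn_lt (T : Type) (lt : T -> T -> Prop) (f g : hahn lt) : Prop :=
  exists theta, Rlt (f theta) (g theta) /\ forall x, lt theta x -> f x = g x.

Definition hahn_le (T : Type) (lt : T -> T -> Prop) (f g : hahn lt) : Prop :=
  f = g \/ hahn_lt f g.

Lemma dwo_empty (T : Type) (lt : T -> T -> Prop) :
  dually_wo lt (fun x : T => R0 <> R0).
Proof. move=> B HB [x Bx]; by case: (HB x Bx). Qed.

Definition hahn0 (T : Type) (lt : T -> T -> Prop) : hahn lt :=
  @Hahn T lt (fun _ => R0) (@dwo_empty T lt).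

Lemma dwo_opp (T : Type) (lt : T -> T -> Prop) (f : hahn lt) :
  dually_wo lt (fun x => Ropp (f x) <> R0).
Proof.
move=> B HB Bne; apply: (@hsupp T lt f B) => //.
move=> x Bx E; apply: (HB x Bx); rewrite E; lra.
Qed.

Definition hahn_opp (T : Type) (lt : T -> T -> Prop) (f : hahn lt) : hahn lt :=
  @Hahn T lt (fun x => Ropp (f x)) (@dwo_opp T lt f).

Definition ind_fun (T : Type) (s : T) : T -> R :=
  fun x => if excluded_middle_informative (x = s) then R1 else R0.

Lemma dwo_ind (T : Type) (lt : T -> T -> Prop) (s : T) :
  dually_wo lt (fun x => ind_fun s x <> R0).
Proof.
move=> B HB [y By]; exists s.
have supp x : B x -> x = s.
  move=> /HB; rewrite /ind_fun; case: excluded_middle_informative => //.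
by rewrite -(supp y By); split => // x /supp ->; rewrite (supp y By); left.
Qed.

Definition hahn_e (T : Type) (lt : T -> T -> Prop) (s : T) : hahn lt :=
  @Hahn T lt (ind_fun s) (@dwo_ind T lt s).

Section Construction.
Context {d : Order.disp_t} (S : bOrderType d).

Definition Sstar : Type := {s : S | (\bot < s)%O}.

Definition Sstar_op_lt (x y : Sstar) : Prop := (val y < val x)%O.

Definition GS : Type := hahn Sstar_op_lt.
Definition GS_lt : GS -> GS -> Prop := @hahn_lt Sstar Sstar_op_lt.

(* underlying ordered group of the Hahn field HH(S) = H(H((S^ * )^op)); the field
   multiplication plays no role in the statement *)
Definition HH : Type := hahn GS_lt.
Definition HH_lt : HH -> HH -> Prop := @hahn_lt GS GS_lt.
Definition HH_le : HH -> HH -> Prop := @hahn_le GS GS_lt.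
Definition HH0 : HH := @hahn0 GS GS_lt.

Definition W_S (s : Sstar) : GS := hahn_opp (@hahn_e Sstar Sstar_op_lt s).

Definition I_S (s : S) : HH :=
  match insub s with
  | Some x => @hahn_e GS GS_lt (W_S x)
  | None => HH0
  end.

Definition coinitial_decr_family (n : nat) (f : nat -> S) : Prop :=
  (forall i, (i < n)%N -> (\bot < f i)%O) /\
  (forall i j, (i < j < n)%N -> (f j < f i)%O) /\
  (forall t : S, (\bot < t)%O -> exists i, (i < n)%N /\ (f i <= t)%O).

(* omega_0 <= chi(S): chi(S) is defined (S^ * non-empty) and no finite (nonzero)
   cardinal admits such a family. *)
Definition chi_ge_omega0 : Prop :=
  (exists t : S, (\bot < t)%O) /\
  forall (n : nat) (f : nat -> S), (0 < n)%N -> ~ coinitial_decr_family n f.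

End Construction.

From mathcomp Require Import all_boot all_order.
From Stdlib Require Import Reals Lra Classical ClassicalEpsilon.
Import Order.TTheory.

Set Implicit Arguments.
Unset Strict Implicit.
Unset Printing Implicit Defensive.

(* I is strictly monotone because s |-> W_S s is strictly increasing into
   H((S^* )^op) and the unit vectors e_g of a Hahn group increase with g.
   For f > 0 with leading point theta, every e_g with g < theta lies strictly
   between 0 and f; so it suffices that W_S(S^* ) is coinitial in
   H((S^* )^op). Since chi(S) is infinite, S^* is non-empty without a least
   element, and any theta vanishes on (S^* )^op above some point u: taking
   a in S^* strictly below u in S gives W_S a < theta. *)

Lemma ind_fun_self (T : Type) (s : T) : ind_fun s s = R1.
Proof. by rewrite /ind_fun; case: excluded_middle_informative. Qed.

Lemma ind_fun_neq (T : Type) (s x : T) : x <> s -> ind_fun s x = R0.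
Proof. by rewrite /ind_fun; case: excluded_middle_informative. Qed.

Lemma hahn_lt_irr (T : Type) (lt : T -> T -> Prop) (f : hahn lt) :
  ~ hahn_lt f f.
Proof. by case=> theta [/Rlt_irrefl]. Qed.

Lemma hahn_lt_asym (T : Type) (lt : T -> T -> Prop) :
  (forall x y, x = y \/ lt x y \/ lt y x) ->
  forall f g : hahn lt, hahn_lt f g -> hahn_lt g f -> False.
Proof.
move=> lt_total f g [t1 [fg1 e1]] [t2 [gf2 e2]].
case: (lt_total t1 t2) => [t12|[t12|t21]]; first by subst; lra.
- by rewrite (e1 _ t12) in gf2; lra.
- by rewrite (e2 _ t21) in fg1; lra.
Qed.

Section HahnUnitVectors.
Variables (T : Type) (lt : T -> T -> Prop).
Hypothesis lt_asym : forall x y, lt x y -> lt y x -> False.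

Let lt_neq x y : lt x y -> y <> x.
Proof. by move=> xy yx; subst y; exact: (lt_asym xy xy). Qed.

Lemma hahn_e_gt0 (s : T) : hahn_lt (hahn0 lt) (hahn_e lt s).
Proof.
exists s => /=; split; first by rewrite ind_fun_self; lra.
by move=> x /lt_neq sx; rewrite ind_fun_neq.
Qed.

Lemma hahn_e_lt (s t : T) : lt s t -> hahn_lt (hahn_e lt s) (hahn_e lt t).
Proof.
move=> st; exists t => /=; split.
  by rewrite ind_fun_self ind_fun_neq; [lra | exact: lt_neq].
move=> x tx; rewrite !ind_fun_neq //; first exact: lt_neq.
by move=> xs; subst; exact: lt_asym st tx.
Qed.

Lemma hahn_opp_e_lt (s t : T) :
  lt t s -> hahn_lt (hahn_opp (hahn_e lt s)) (hahn_opp (hahn_e lt t)).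
Proof.
move=> ts; exists s => /=; split.
  by rewrite ind_fun_self ind_fun_neq; [lra | exact: lt_neq].
move=> x sx; rewrite !ind_fun_neq //; last exact: lt_neq.
by move=> xt; subst; exact: lt_asym ts sx.
Qed.

Lemma hahn_e_lt_leading (f : hahn lt) (s theta : T) :
  Rlt R0 (f theta) -> (forall x, lt theta x -> f x = R0) -> lt s theta ->
  hahn_lt (hahn_e lt s) f.
Proof.
move=> f_theta f_above s_theta; exists theta => /=; split.
  by rewrite ind_fun_neq //; exact: lt_neq.
move=> x theta_x; rewrite f_above // ind_fun_neq //.
by move=> xs; subst; exact: lt_asym s_theta theta_x.
Qed.

Lemma hahn_eventually_zero (f : hahn lt) (x0 : T) :
  exists u, forall x, lt u x -> f x = R0.
Proof.
case: (classic (exists x, f x <> R0)) => [supp_f|]; last first.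
  by move=> f0; exists x0 => x _; apply: NNPP => fx; apply: f0; exists x.
have [m [_ m_max]] := @hsupp _ _ f (fun x => f x <> R0) (fun x fx => fx) supp_f.
exists m => x mx; apply: NNPP => /m_max [xm|xm].
- exact: lt_neq mx xm.
- exact: lt_asym mx xm.
Qed.

Hypothesis lt_trans : forall x y z, lt x y -> lt y z -> lt x z.

Lemma hahn_opp_e_lt_zero_above (f : hahn lt) (u s : T) :
  (forall x, lt u x -> f x = R0) -> lt u s -> hahn_lt (hahn_opp (hahn_e lt s)) f.
Proof.
move=> f_above us; exists s => /=; split.
  by rewrite ind_fun_self f_above //; lra.
move=> x sx; rewrite f_above; last exact: lt_trans us sx.
by rewrite ind_fun_neq; [lra | exact: lt_neq].
Qed.

End HahnUnitVectors.

Section Embedding.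
Context {d : Order.disp_t} (S : bOrderType d).
Local Open Scope order_scope.

Lemma Sstar_op_lt_asym (a b : Sstar S) :
  Sstar_op_lt a b -> Sstar_op_lt b a -> False.
Proof. by rewrite /Sstar_op_lt => ba /(lt_trans ba); rewrite ltxx. Qed.

Lemma Sstar_op_lt_trans (a b c : Sstar S) :
  Sstar_op_lt a b -> Sstar_op_lt b c -> Sstar_op_lt a c.
Proof. by rewrite /Sstar_op_lt => ba cb; exact: lt_trans cb ba. Qed.

Lemma Sstar_op_lt_total (a b : Sstar S) :
  a = b \/ Sstar_op_lt a b \/ Sstar_op_lt b a.
Proof.
rewrite /Sstar_op_lt; case: (ltgtP (val a) (val b)) => ab;
  [by right; right | by right; left | by left; apply: val_inj].
Qed.

Lemma GS_lt_asym (f g : GS S) : GS_lt f g -> GS_lt g f -> False.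
Proof. exact: (@hahn_lt_asym _ (@Sstar_op_lt d S) Sstar_op_lt_total). Qed.

Lemma W_S_lt (a b : Sstar S) : val a < val b -> GS_lt (W_S a) (W_S b).
Proof. exact: (@hahn_opp_e_lt _ _ (@Sstar_op_lt_asym) a b). Qed.

Lemma I_S_bot : I_S (\bot : S) = HH0 S.
Proof. by rewrite /I_S insubF // ltxx. Qed.

Lemma I_S_Sstar (a : Sstar S) : I_S (val a) = hahn_e (@GS_lt d S) (W_S a).
Proof. by rewrite /I_S valK. Qed.

Lemma I_S_lt (s t : S) : s < t -> HH_lt (I_S s) (I_S t).
Proof.
move=> st; have t_gt0 : \bot < t by exact: le_lt_trans (le0x s) st.
rewrite -[t]/(val (exist _ t t_gt0 : Sstar S)) I_S_Sstar.
case: (eqVneq s \bot) => [->|s_bot].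
  by rewrite I_S_bot; exact: (@hahn_e_gt0 _ _ (@GS_lt_asym)).
have s_gt0 : \bot < s by rewrite lt_neqAle eq_sym s_bot le0x.
rewrite -[s]/(val (exist _ s s_gt0 : Sstar S)) I_S_Sstar.
by apply: (@hahn_e_lt _ _ (@GS_lt_asym)); exact: W_S_lt.
Qed.

Hypothesis chiS : chi_ge_omega0 S.

(* A least element of S^* would be a coinitial family of length 1. *)
Lemma Sstar_no_min (a : Sstar S) : exists b : Sstar S, val b < val a.
Proof.
apply: NNPP => no_b; apply: (chiS.2 1%N (fun _ => val a) isT).
split; first by move=> i _; exact: valP a.
split; first by move=> i [|[|j]] /andP[].
move=> t t_gt0; exists 0%N; split => //; rewrite leNgt; apply/negP => ta.
by apply: no_b; exists (exist _ t t_gt0).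
Qed.

Lemma W_S_coinitial (theta : GS S) : exists a : Sstar S, GS_lt (W_S a) theta.
Proof.
have [t t_gt0] := chiS.1.
have [u theta_above] := hahn_eventually_zero Sstar_op_lt_asym theta (exist _ t t_gt0).
have [a au] := Sstar_no_min u.
exists a; apply: (@hahn_opp_e_lt_zero_above _ _ (@Sstar_op_lt_asym)) au => //.
exact: Sstar_op_lt_trans.
Qed.

End Embedding.

Theorem proposition2p24 {d : Order.disp_t} (S : bOrderType d) :
  chi_ge_omega0 S ->
  injective (@I_S d S) /\
  (forall s t : S, (s <= t)%O -> HH_le (I_S s) (I_S t)) /\
  (exists s : S, I_S s = HH0 S) /\
  (forall f : HH S, HH_lt (HH0 S) f ->
     exists s : S, (\bot < s)%O /\ HH_lt (HH0 S) (I_S s) /\ HH_lt (I_S s) f).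
Proof.
move=> chiS; split.
  move=> s t Ist; case: (ltgtP s t) => // st; have := I_S_lt st;
    by rewrite Ist => /hahn_lt_irr.
split.
  by move=> s t; rewrite le_eqVlt => /orP[/eqP->|st]; [left | right; exact: I_S_lt].
split; first by exists \bot%O; exact: I_S_bot.
move=> f [theta [f_theta f_above]].
have [a Wa_theta] := W_S_coinitial chiS theta.
exists (val a); rewrite I_S_Sstar; split; first exact: valP a.
split; first exact: hahn_e_gt0 (@GS_lt_asym d S) _.
apply: hahn_e_lt_leading f_theta _ Wa_theta; first exact: GS_lt_asym.
by move=> x /f_above.
Qed.
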